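(* Let $(T,\leq)$ be an ordered set and let $T^\ast$ be its ultrapower with respect to an ultrafilter $\mathcal{U}$ on $\mathbb{N}$. The following are equivalent: (a) $T$ is dense everywhere, i.e. for all $a,b \in T$ with $a < b$ there exists $c \in T$ with $a < c < b$; (b) whenever $a_k = ((a_k)_n)$ and $b_k = ((b_k)_n)$ ($k\in\mathbb{N}$) are sequences in $T$ such that for every $k \in \mathbb{N}$ \[ \overline{a_k} \leq \overline{a_{k+1}} < \overline{b_{k+1}} \leq \overline{b_k}, \] then \[ \bigcap_{k\in\mathbb{N}} \, ]\overline{a_k}, \overline{b_k}[ \, \neq \emptyset, \] where $]x,y[ = \{ z \in T^\ast : x < z < y\}$.
   Context: An ordered set is a nonempty set with a reflexive, antisymmetric, transitive and linear (total) relation $\leq$. An ultrafilter on $\mathbb{N}$ is a nonempty family $\mathcal{U}$ of subsets of $\mathbb{N}$ such that: (1) $K \in \mathcal{U}$, $K \subset L \subset \mathbb{N}$ imply $L \in \mathcal{U}$; (2) $K,L \in \mathcal{U}$ imply $K\cap L \in \mathcal{U}$; (3) every $K \in \mathcal{U}$ is infinite; (4) for every $K \subset \mathbb{N}$, $K \in \mathcal{U}$ or $\mathbb{N}\setminus K \in \mathcal{U}$. The ultrapower $T^\ast$: on the set $\mathcal{T}$ of all sequences $(a_n):\mathbb{N}\to T$ define $(a_n)\sim(b_n)$ iff $\{n : a_n = b_n\} \in \mathcal{U}$; this is an equivalence relation, $T^\ast$ is the set of its classes, $\overline{(a_n)}$ denotes the class of $(a_n)$, and $T^\ast$ is ordered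 by $\overline{(a_n)} \leq \overline{(b_n)}$ iff $\{ n : a_n \leq b_n\} \in \mathcal{U}$ (a well-defined total order); $<$ denotes the corresponding strict order. *)

From Stdlib Require Import Arith.

Definition ordered_set {T : Type} (le : T -> T -> Prop) : Prop :=
  (forall x, le x x) /\
  (forall x y, le x y -> le y x -> x = y) /\
  (forall x y z, le x y -> le y z -> le x z) /\
  (forall x y, le x y \/ le y x).

Definition lt_of {T : Type} (le : T -> T -> Prop) (x y : T) : Prop :=
  le x y /\ x <> y.

Definition dense_everywhere {T : Type} (le : T -> T -> Prop) : Prop :=
  forall a b : T, lt_of le a b -> exists c : T, lt_of le a c /\ lt_of le c b.

Definition ultrafilter (U : (nat -> Prop) -> Prop) : Prop :=
  (exists K, U K) /\
  (forall K L : nat -> Prop, U K -> (forall n, K n -> L n) -> U L) /\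
  (forall K L : nat -> Prop, U K -> U L -> U (fun n => K n /\ L n)) /\
  (forall K : nat -> Prop, U K -> forall m, exists n, m <= n /\ K n) /\
  (forall K : nat -> Prop, U K \/ U (fun n => ~ K n)).

(* Ultrapower T^* : elements are represented by sequences nat -> T.
   Equivalence, order and strict order on T^* expressed on representatives
   (all are invariant under the equivalence). *)
Definition ueq {T : Type} (U : (nat -> Prop) -> Prop) (a b : nat -> T) : Prop :=
  U (fun n => a n = b n).

Definition ule {T : Type} (U : (nat -> Prop) -> Prop) (le : T -> T -> Prop)
  (a b : nat -> T) : Prop :=
  U (fun n => le (a n) (b n)).

Definition ult {T : Type} (U : (nat -> Prop) -> Prop) (le : T -> T -> Prop)
  (a b : nat -> T) : Prop :=
  ule U le a b /\ ~ ueq U a b.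

(* (a) => (b): at coordinate n, among the first n intervals ]a_k n, b_k n[
   that are nonempty and nested in their predecessors, the last one is
   contained in all the others; pick z n inside it by density.  For a fixed k,
   the coordinates n >= k at which the first k intervals are nested and
   nonempty form a set of U, and there a_k n < z n < b_k n.
   (b) => (a): apply (b) to the constant sequences x < y; any coordinate of
   the resulting z at which x < z n < y holds is a point between x and y. *)

From Stdlib Require Import Arith Lia Classical ClassicalEpsilon.

Section Ultrafilter.

Variable U : (nat -> Prop) -> Prop.
Hypothesis HU : ultrafilter U.

Lemma uf_upward (K L : nat -> Prop) : U K -> (forall n, K n -> L n) -> U L.
Proof. destruct HU as (_ & H & _). apply H. Qed.

Lemma uf_inter (K L : nat -> Prop) : U K -> U L -> U (fun n => K n /\ L n).
Proof. destruct HU as (_ & _ & H & _). apply H. Qed.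

Lemma uf_full (K : nat -> Prop) : (forall n, K n) -> U K.
Proof.
  destruct HU as ((K0 & HK0) & _). intros HK.
  apply (uf_upward K0); auto.
Qed.

Lemma uf_witness (K : nat -> Prop) : U K -> exists n, K n.
Proof.
  destruct HU as (_ & _ & _ & Hinf & _). intros HK.
  destruct (Hinf K HK 0) as (n & _ & Hn). eauto.
Qed.

Lemma uf_tail (k : nat) : U (fun n => k <= n).
Proof.
  destruct HU as (_ & _ & _ & Hinf & Hultra).
  destruct (Hultra (fun n => k <= n)) as [H | H]; [exact H |].
  destruct (Hinf _ H k) as (n & Hkn & Hn). contradiction.
Qed.

Lemma ult_iff_ae_lt {T : Type} (le : T -> T -> Prop) (a b : nat -> T) :
  ult U le a b <-> U (fun n => lt_of le (a n) (b n)).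
Proof.
  split.
  - intros [Hle Hneq].
    destruct HU as (_ & _ & _ & _ & Hultra).
    destruct (Hultra (fun n => a n = b n)) as [Heq | Hdiff]; [contradiction |].
    apply (uf_upward _ _ (uf_inter _ _ Hle Hdiff)). intros n Hn. exact Hn.
  - intros Hlt. split.
    + apply (uf_upward _ _ Hlt). intros n Hn. apply Hn.
    + intros Heq.
      destruct (uf_witness _ (uf_inter _ _ Hlt Heq)) as (n & [_ Hneq] & Hn).
      contradiction.
Qed.

End Ultrafilter.

Section NestedIntervals.

Context {T : Type}.
Variable le : T -> T -> Prop.
Hypothesis HT : ordered_set le.

Lemma lt_of_le_lt_le x x' y' y :
  le x x' -> lt_of le x' y' -> le y' y -> lt_of le x y.
Proof.
  destruct HT as (_ & Hanti & Htrans & _). intros Hx [Hle' Hneq'] Hy. split.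
  - eauto.
  - intros <-. apply Hneq'. apply Hanti; eauto.
Qed.

Variables a b : nat -> T.

Definition nested (k : nat) : Prop :=
  forall j, j < k -> le (a j) (a (S j)) /\ le (b (S j)) (b j).

Definition nested_lt (k : nat) : Prop := nested k /\ lt_of le (a k) (b k).

Lemma nested_bounds k j : nested k -> j <= k -> le (a j) (a k) /\ le (b k) (b j).
Proof.
  destruct HT as (Hrefl & _ & Htrans & _).
  induction k as [| k IHk]; intros Hk Hjk.
  - replace j with 0 by lia. auto.
  - destruct (Nat.eq_dec j (S k)) as [-> | Hj]; [auto |].
    destruct (Hk k (Nat.lt_succ_diag_r k)) as [Ha Hb].
    destruct IHk as [Haj Hbj]; [intros i Hi; apply Hk; lia | lia |].
    eauto.
Qed.

Hypothesis Hdense : dense_everywhere le.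

Lemma nested_lt_point k :
  nested_lt k -> exists c, forall j, j <= k -> lt_of le (a j) c /\ lt_of le c (b j).
Proof.
  destruct HT as (Hrefl & _).
  intros [Hk Hlt]. destruct (Hdense _ _ Hlt) as (c & Hac & Hcb).
  exists c. intros j Hjk. destruct (nested_bounds k j Hk Hjk).
  split; eapply lt_of_le_lt_le; eauto.
Qed.

Hypothesis Hne : inhabited T.

Lemma nested_lt_common_point N :
  exists c, forall k, k <= N -> nested_lt k -> lt_of le (a k) c /\ lt_of le c (b k).
Proof.
  induction N as [| N IHN].
  - destruct (classic (nested_lt 0)) as [H0 | H0].
    + destruct (nested_lt_point 0 H0) as (c & Hc). eauto.
    + destruct Hne as [t]. exists t. intros k Hk Hlt.
      replace k with 0 in Hlt by lia. contradiction.
  - destruct (classic (nested_lt (S N))) as [HN | HN].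
    + destruct (nested_lt_point (S N) HN) as (c & Hc). eauto.
    + destruct IHN as (c & Hc). exists c. intros k Hk Hlt.
      destruct (Nat.eq_dec k (S N)) as [-> | Hneq]; [contradiction |].
      apply Hc; [lia | exact Hlt].
Qed.

End NestedIntervals.

Section UltrapowerIntervals.

Context {T : Type}.
Variable le : T -> T -> Prop.
Hypothesis HT : ordered_set le.
Variable U : (nat -> Prop) -> Prop.
Hypothesis HU : ultrafilter U.

Variables a b : nat -> nat -> T.
Hypothesis Hab : forall k,
  ule U le (a k) (a (S k)) /\ ult U le (a (S k)) (b (S k)) /\ ule U le (b (S k)) (b k).

Let a_at (n : nat) : nat -> T := fun k => a k n.
Let b_at (n : nat) : nat -> T := fun k => b k n.

Lemma ae_nested k : U (fun n => nested le (a_at n) (b_at n) k).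
Proof.
  induction k as [| k IHk].
  - apply uf_full; [exact HU |]. intros n j Hj. lia.
  - destruct (Hab k) as (Ha & _ & Hb).
    apply (uf_upward U HU _ _ (uf_inter U HU _ _ IHk (uf_inter U HU _ _ Ha Hb))).
    intros n (Hn & Han & Hbn) j Hj.
    destruct (Nat.eq_dec j k) as [-> | Hjk]; [auto | apply Hn; lia].
Qed.

Lemma ae_nested_lt k : U (fun n => nested_lt le (a_at n) (b_at n) k).
Proof.
  destruct (Hab k) as (_ & Hlt & _).
  apply (ult_iff_ae_lt U HU) in Hlt.
  apply (uf_upward U HU _ _ (uf_inter U HU _ _ (ae_nested (S k)) Hlt)).
  intros n [Hn HSk]. split.
  - intros j Hj. apply Hn. lia.
  - destruct (Hn k (Nat.lt_succ_diag_r k)) as [Ha Hb].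
    exact (lt_of_le_lt_le le HT _ _ _ _ Ha HSk Hb).
Qed.

Hypothesis Hdense : dense_everywhere le.
Hypothesis Hne : inhabited T.

Lemma ultrapower_nested_intervals_meet :
  exists z : nat -> T, forall k, ult U le (a k) z /\ ult U le z (b k).
Proof.
  destruct (choice (fun n c => forall k, k <= n ->
              nested_lt le (a_at n) (b_at n) k ->
              lt_of le (a k n) c /\ lt_of le c (b k n)))
    as (z & Hz).
  { intro n. exact (nested_lt_common_point le HT (a_at n) (b_at n) Hdense Hne n). }
  exists z. intros k.
  assert (Hk : U (fun n => k <= n /\ nested_lt le (a_at n) (b_at n) k))
    by exact (uf_inter U HU _ _ (uf_tail U HU k) (ae_nested_lt k)).
  split; apply (ult_iff_ae_lt U HU); apply (uf_upward U HU _ _ Hk);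
    intros n [Hkn Hn]; apply (Hz n k Hkn Hn).
Qed.

End UltrapowerIntervals.

Lemma dense_of_ultrapower_nested_intervals {T : Type} (le : T -> T -> Prop)
  (HT : ordered_set le) (U : (nat -> Prop) -> Prop) (HU : ultrafilter U) :
  (forall a b : nat -> nat -> T,
     (forall k, ule U le (a k) (a (S k)) /\ ult U le (a (S k)) (b (S k)) /\
                ule U le (b (S k)) (b k)) ->
     exists z : nat -> T, forall k, ult U le (a k) z /\ ult U le z (b k)) ->
  dense_everywhere le.
Proof.
  destruct HT as (Hrefl & _). intros Hmeet x y Hxy.
  assert (Hconst : ult U le (fun _ : nat => x) (fun _ => y))
    by (apply (ult_iff_ae_lt U HU), (uf_full U HU); auto).
  destruct (Hmeet (fun _ _ => x) (fun _ _ => y)) as (z & Hz).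
  { intros k. split; [| split; [exact Hconst |]]; apply (uf_full U HU); auto. }
  destruct (Hz 0) as [Hxz Hzy].
  apply (ult_iff_ae_lt U HU) in Hxz, Hzy.
  destruct (uf_witness U HU _ (uf_inter U HU _ _ Hxz Hzy)) as (n & Hn).
  exists (z n). exact Hn.
Qed.

Theorem mainTheorem4 (T : Type) (le : T -> T -> Prop)
  (HT : ordered_set le) (Hne : inhabited T)
  (U : (nat -> Prop) -> Prop) (HU : ultrafilter U) :
  dense_everywhere le <->
  (forall a b : nat -> (nat -> T),
     (forall k : nat,
        ule U le (a k) (a (S k)) /\ ult U le (a (S k)) (b (S k)) /\
        ule U le (b (S k)) (b k)) ->
     exists z : nat -> T, forall k : nat, ult U le (a k) z /\ ult U le z (b k)).
Proof.
  split.
  - intros Hdense a b Hab.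
    exact (ultrapower_nested_intervals_meet le HT U HU a b Hab Hdense Hne).
  - exact (dense_of_ultrapower_nested_intervals le HT U HU).
Qed.
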